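(* Let $G$ be a simple undirected graph and let $G'$ be any subgraph of $G$. Then $\rho(M_G(s))\geq \rho(M_{G'}(s))$ for all $s\in(-\infty,0]\cup[1,+\infty)$.
   Context: For a simple undirected graph $G$ on $n$ vertices with adjacency matrix $A$, diagonal degree matrix $D$ and $n\times n$ identity matrix $I$, and a real parameter $s$, the deformed Laplacian matrix of $G$ is $M_G(s)=I-sA+s^2(D-I)$ (for a subgraph $G'$, $M_{G'}(s)$ is formed with the adjacency and degree matrices of $G'$ itself). For a real symmetric matrix $B$, $\rho(B)$ denotes its spectral radius, i.e. its largest eigenvalue $\sup_{|x|=1}\langle x,Bx\rangle$. *)

From HB Require Import structures.
From mathcomp Require Import all_boot all_order all_algebra.
From mathcomp Require Import boolp classical_sets reals.
Set Implicit Arguments. Unset Strict Implicit. Unset Printing Implicit Defensive.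
Import Order.TTheory GRing.Theory Num.Theory.
Local Open Scope ring_scope.

Definition simple_graph (n : nat) (e : rel 'I_n) : Prop :=
  irreflexive e /\ symmetric e.

Definition adjmx (R : realType) (n : nat) (e : rel 'I_n) : 'M[R]_n :=
  \matrix_(i, j) (e i j)%:R.

Definition deg (n : nat) (e : rel 'I_n) (i : 'I_n) : nat := #|[set j | e i j]|.

Definition degmx (R : realType) (n : nat) (e : rel 'I_n) : 'M[R]_n :=
  \matrix_(i, j) ((i == j)%:R * (deg e i)%:R).

Definition deformed_laplacian (R : realType) (n : nat) (e : rel 'I_n) (s : R) : 'M[R]_n :=
  1%:M - s *: adjmx R e + s ^+ 2 *: (degmx R e - 1%:M).

(* spectral radius of a real symmetric matrix = its largest (real) eigenvalue *)
Definition rho (R : realType) (n : nat) (B : 'M[R]_n) : R :=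
  sup [set a : R | eigenvalue B a].

Definition subgraph_via (n m : nat) (e : rel 'I_n) (e' : rel 'I_m) (f : 'I_m -> 'I_n) : Prop :=
  injective f /\ (forall x y, e' x y -> e (f x) (f y)).

From HB Require Import structures.
From mathcomp Require Import all_boot all_order all_algebra.
From mathcomp Require Import boolp classical_sets reals.
From mathcomp Require Import ring lra.
Set Implicit Arguments. Unset Strict Implicit. Unset Printing Implicit Defensive.
Import Order.TTheory GRing.Theory Num.Theory.
Local Open Scope ring_scope.

(* The spectral radius of a real symmetric matrix is the supremum of its
   Rayleigh quotients.  The quadratic form of M_G(s) is (1 - s^2)|x|^2 plus,
   for every edge ij, the term s^2 x_i^2 + s^2 x_j^2 - 2 s x_i x_j.  For
   s >= 1 these edge terms are nonnegative; for s <= 0 they are nonnegative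
   once x is replaced by |x|, which only increases them.  Extending such a
   test vector of G' by zero along the vertex embedding into G keeps its
   norm and only adds nonnegative edge terms, so every Rayleigh quotient of
   M_G'(s) is dominated by one of M_G(s). *)

Section MxForm.
Variables (R : comPzRingType) (k : nat).
Implicit Types (A B : 'M[R]_k) (u v : 'rV[R]_k).

Definition mxform A u v : R := (u *m A *m v^T) 0 0.
Definition sqnorm u : R := (u *m u^T) 0 0.

Lemma mxformE A u v : mxform A u v = \sum_j \sum_i u 0 i * A i j * v 0 j.
Proof.
rewrite /mxform mxE; apply: eq_bigr => j _.
by rewrite [X in X * _]mxE mulr_suml [v^T _ _]mxE.
Qed.

Lemma sqnormE u : sqnorm u = \sum_i u 0 i ^+ 2.
Proof. by rewrite /sqnorm mxE; apply: eq_bigr => i _; rewrite !mxE expr2. Qed.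

Lemma mxformDl A u1 u2 v : mxform A (u1 + u2) v = mxform A u1 v + mxform A u2 v.
Proof. by rewrite /mxform !mulmxDl mxE. Qed.

Lemma mxformZl A a u v : mxform A (a *: u) v = a * mxform A u v.
Proof. by rewrite /mxform -!scalemxAl mxE. Qed.

Lemma mxformDr A u v1 v2 : mxform A u (v1 + v2) = mxform A u v1 + mxform A u v2.
Proof. by rewrite /mxform linearD /= mulmxDr mxE. Qed.

Lemma mxformZr A a u v : mxform A u (a *: v) = a * mxform A u v.
Proof. by rewrite /mxform linearZ /= -scalemxAr mxE. Qed.

Lemma mxformDm A B u v : mxform (A + B) u v = mxform A u v + mxform B u v.
Proof. by rewrite /mxform mulmxDr mulmxDl mxE. Qed.

Lemma mxformNm A u v : mxform (- A) u v = - mxform A u v.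
Proof. by rewrite /mxform mulmxN mulNmx mxE. Qed.

Lemma mxformZm A a u v : mxform (a *: A) u v = a * mxform A u v.
Proof. by rewrite /mxform -scalemxAr -scalemxAl mxE. Qed.

Lemma mxform_scalar a u : mxform a%:M u u = a * sqnorm u.
Proof. by rewrite /mxform mul_mx_scalar -scalemxAl mxE. Qed.

Lemma mxform0 A v : mxform A 0 v = 0.
Proof. by rewrite /mxform !mul0mx mxE. Qed.

Lemma mxform_sym A u v : A^T = A -> mxform A v u = mxform A u v.
Proof.
move=> sA; rewrite /mxform -[in LHS](trmxK (v *m A *m u^T)) [in LHS]mxE.
by rewrite !trmx_mul sA trmxK mulmxA.
Qed.

End MxForm.

Section MxFormBound.
Variables (R : realDomainType) (k : nat).
Implicit Types (A : 'M[R]_k) (x : 'rV[R]_k).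

Lemma sqr_le_sqnorm x i : x 0 i ^+ 2 <= sqnorm x.
Proof. by rewrite sqnormE (bigD1 i) //= lerDl sumr_ge0 // => j _; rewrite sqr_ge0. Qed.

Lemma sqnorm_gt0 x : x != 0 -> 0 < sqnorm x.
Proof.
move=> x0; have [i xi0] : exists i, x 0 i != 0.
  apply/existsP; apply: contraR x0 => /existsPn x0.
  by apply/eqP/rowP => i; rewrite mxE; apply/eqP; rewrite -[_ == _]negbK x0.
by apply: lt_le_trans (sqr_le_sqnorm x i); rewrite lt_def sqrf_eq0 xi0 sqr_ge0.
Qed.

Lemma mxform_bound A : exists2 K, 0 <= K & forall x, `|mxform A x x| <= K * sqnorm x.
Proof.
exists (\sum_j \sum_i `|A i j|).
  by apply: sumr_ge0 => j _; apply: sumr_ge0.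
move=> x; rewrite mxformE mulr_suml; apply: le_trans (ler_norm_sum _ _ _) _.
apply: ler_sum => j _; rewrite mulr_suml; apply: le_trans (ler_norm_sum _ _ _) _.
apply: ler_sum => i _; rewrite mulrAC normrM mulrC ler_wpM2l //.
have := sqr_le_sqnorm x i; have := sqr_le_sqnorm x j.
have := sqr_ge0 (x 0 i - x 0 j); have := sqr_ge0 (x 0 i + x 0 j).
rewrite sqrrB sqrrD ler_norml => *; apply/andP; split; nra.
Qed.

End MxFormBound.

Section Rayleigh.
Variables (R : realType) (k : nat) (B : 'M[R]_k).
Hypothesis k_gt0 : (0 < k)%N.

Definition rayleigh (x : 'rV[R]_k) : R := mxform B x x / sqnorm x.
Definition rayleigh_sup : R := sup (rayleigh @` [set x | x != 0]).

Lemma has_sup_rayleigh : has_sup (rayleigh @` [set x | x != 0]).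
Proof.
split.
  exists (rayleigh (const_mx 1)), (const_mx 1) => //=.
  by apply/eqP => /rowP /(_ (Ordinal k_gt0)) /eqP; rewrite !mxE oner_eq0.
have [K _ leK] := mxform_bound B.
exists K => _ [x /= x0 <-]; rewrite /rayleigh ler_pdivrMr ?sqnorm_gt0 //.
exact: le_trans (ler_norm _) (leK x).
Qed.

Lemma mxform_le_rayleigh_sup x : mxform B x x <= rayleigh_sup * sqnorm x.
Proof.
have [->|x0] := eqVneq x 0; first by rewrite mxform0 /sqnorm mul0mx mxE mulr0.
rewrite -ler_pdivrMr ?sqnorm_gt0 //.
by apply: sup_upper_bound has_sup_rayleigh _ _; exists x.
Qed.

Lemma eigenvalue_le_rayleigh_sup a : eigenvalue B a -> a <= rayleigh_sup.
Proof.
move=> /eigenvalueP [v vB v0].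
have := mxform_le_rayleigh_sup v.
by rewrite /mxform vB -scalemxAl mxE -/(sqnorm v) ler_pM2r ?sqnorm_gt0.
Qed.

Hypothesis B_sym : B^T = B.

(* Otherwise P := B - mu has an inverse C, and the form Q_P is nonpositive.
   Let K bound the form of C^T and t := K + 1.  For x with Rayleigh quotient
   above mu - 1/t and z := x C, so that z P = x,
   Q_P(z + t x) = Q_C^T(x) + 2 t |x|^2 + t^2 Q_P(x) > (- K + 2 t - t) |x|^2 > 0. *)
Lemma eigenvalue_rayleigh_sup : eigenvalue B rayleigh_sup.
Proof.
set mu := rayleigh_sup; apply: contraT; rewrite /eigenvalue /eigenspace negbK.
rewrite kermx_eq0 row_free_unit => P_unit.
set P := B - mu%:M in P_unit; set C := invmx P.
have P_sym : P^T = P by rewrite /P linearB /= B_sym tr_scalar_mx.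
have formP u : mxform P u u = mxform B u u - mu * sqnorm u.
  by rewrite /P mxformDm mxformNm mxform_scalar.
have P_le0 u : mxform P u u <= 0 by rewrite formP subr_le0 mxform_le_rayleigh_sup.
have [K K_ge0 leK] := mxform_bound C^T.
have t_gt0 : 0 < K + 1 by rewrite ltr_wpDl.
have tV_gt0 : 0 < (K + 1)^-1 by rewrite invr_gt0.
have [_ [x /= x0 <-] ltx] := sup_adherent tV_gt0 has_sup_rayleigh.
have N_gt0 := sqnorm_gt0 x0.
have Px : - sqnorm x < mxform P x x * (K + 1).
  have tVt : (K + 1)^-1 * (K + 1) = 1 by rewrite mulVf ?gt_eqF.
  move: ltx; rewrite -/rayleigh_sup -/mu /rayleigh ltr_pdivlMr // formP; nra.
set z := x *m C.
have zP : z *m P = x by rewrite /z -mulmxA mulVmx // mulmx1.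
have Pzz : mxform P z z = mxform C^T x x by rewrite /mxform zP /z trmx_mul !mulmxA.
have Pzx : mxform P z x = sqnorm x by rewrite /mxform zP.
have Pxz : mxform P x z = sqnorm x by rewrite mxform_sym.
have := P_le0 (z + (K + 1) *: x).
rewrite mxformDl !mxformDr !mxformZl !mxformZr Pzz Pzx Pxz.
have := leK x; rewrite ler_norml => /andP [leKx _].
nra.
Qed.

Lemma rho_rayleigh_sup : rho B = rayleigh_sup.
Proof.
have eig_ne0 : ([set a | eigenvalue B a] !=set0)%classic.
  by exists rayleigh_sup; exact: eigenvalue_rayleigh_sup.
apply/eqP; rewrite eq_le; apply/andP; split.
  by apply: ge_sup eig_ne0 _ => a /eigenvalue_le_rayleigh_sup.
apply: sup_upper_bound; last exact: eigenvalue_rayleigh_sup.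
by split=> //; exists rayleigh_sup => a /eigenvalue_le_rayleigh_sup.
Qed.

End Rayleigh.

Lemma ler_sum_inj (R : numDomainType) (I J : finType) (f : I -> J) (F : J -> R) :
  injective f -> (forall j, 0 <= F j) -> \sum_i F (f i) <= \sum_j F j.
Proof.
move=> f_inj F_ge0; rewrite -(big_imset _ (in2W f_inj)) /=.
set S := imset _ _; by rewrite [leRHS](bigID [in S]) /= lerDl sumr_ge0.
Qed.

Section Embedding.
Variables (R : comPzRingType) (m n : nat) (f : 'I_m -> 'I_n).
Hypothesis f_inj : injective f.

Definition embedmx : 'M[R]_(m, n) := \matrix_(a, j) (f a == j)%:R.

Lemma mul_embedmx_tr : embedmx *m embedmx^T = 1%:M.
Proof.
apply/matrixP => a b; rewrite !mxE (bigD1 (f a)) //= big1 => [|j /negbTE ja].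
  by rewrite !mxE eqxx mul1r addr0 (inj_eq f_inj) eq_sym.
by rewrite !mxE eq_sym ja mul0r.
Qed.

Lemma mul_embedmxE (x : 'rV[R]_m) a : (x *m embedmx) 0 (f a) = x 0 a.
Proof.
rewrite mxE (bigD1 a) //= big1 => [|b /negbTE ba].
  by rewrite mxE eqxx mulr1 addr0.
by rewrite mxE (inj_eq f_inj) ba mulr0.
Qed.

Lemma sqnorm_mul_embedmx (x : 'rV[R]_m) : sqnorm (x *m embedmx) = sqnorm x.
Proof. by rewrite /sqnorm trmx_mul mulmxA -(mulmxA x) mul_embedmx_tr mulmx1. Qed.

End Embedding.

Section GraphMatrices.
Variables (R : realType) (k : nat) (e : rel 'I_k).
Implicit Type x : 'rV[R]_k.

Lemma natr_deg i : (deg e i)%:R = \sum_j (e i j)%:R :> R.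
Proof.
rewrite /deg -sumr_const big_mkcond /=; apply: eq_bigr => j _.
by rewrite inE; case: (e i j).
Qed.

Lemma mxform_adjmx x :
  mxform (adjmx R e) x x = \sum_i \sum_j (e i j)%:R * (x 0 i * x 0 j).
Proof.
rewrite mxformE exchange_big; apply: eq_bigr => i _; apply: eq_bigr => j _.
by rewrite mxE; ring.
Qed.

Lemma mxform_degmx x :
  mxform (degmx R e) x x = \sum_i \sum_j (e i j)%:R * x 0 i ^+ 2.
Proof.
rewrite mxformE; apply: eq_bigr => i _; rewrite (bigD1 i) //= big1 => [|j ji].
  rewrite mxE eqxx addr0 natr_deg mul1r mulrAC -expr2 mulr_sumr.
  by apply: eq_bigr => j _; rewrite mulrC.
by rewrite /degmx mxE (negbTE ji) mul0r mulr0 mul0r.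
Qed.

Hypothesis e_sym : symmetric e.

Lemma deformed_laplacian_sym (s : R) :
  (deformed_laplacian e s)^T = deformed_laplacian e s.
Proof.
have adj_sym : (adjmx R e)^T = adjmx R e by apply/matrixP => i j; rewrite !mxE e_sym.
have deg_sym : (degmx R e)^T = degmx R e.
  by apply/matrixP => i j; rewrite !mxE eq_sym; case: eqVneq => [->|]; rewrite ?mul0r.
by rewrite /deformed_laplacian !linearD !linearN !linearZ /= tr_scalar_mx adj_sym deg_sym.
Qed.

End GraphMatrices.

Section EdgeEnergy.
Variables (R : realType) (s : R).

Definition edge_energy (a b : R) : R :=
  s ^+ 2 * a ^+ 2 + s ^+ 2 * b ^+ 2 - 2 * s * (a * b).

Definition edge_energy_sum k (e : rel 'I_k) (x : 'rV[R]_k) : R :=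
  \sum_i \sum_j (e i j)%:R * edge_energy (x 0 i) (x 0 j).

Lemma mxform_deformed_laplacian k (e : rel 'I_k) (x : 'rV[R]_k) : symmetric e ->
  2 * mxform (deformed_laplacian e s) x x
  = 2 * (1 - s ^+ 2) * sqnorm x + edge_energy_sum e x.
Proof.
move=> e_sym.
have sum_sqr_sym : \sum_i \sum_j (e i j)%:R * x 0 j ^+ 2
                 = \sum_i \sum_j (e i j)%:R * x 0 i ^+ 2 :> R.
  by rewrite exchange_big; apply: eq_bigr => i _; apply: eq_bigr => j _; rewrite e_sym.
have -> : edge_energy_sum e x
        = s ^+ 2 * (\sum_i \sum_j (e i j)%:R * x 0 i ^+ 2)
        + s ^+ 2 * (\sum_i \sum_j (e i j)%:R * x 0 j ^+ 2)
        - 2 * s * (\sum_i \sum_j (e i j)%:R * (x 0 i * x 0 j)).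
  rewrite !mulr_sumr -big_split -sumrB /=; apply: eq_bigr => i _.
  rewrite !mulr_sumr -big_split -sumrB /=; apply: eq_bigr => j _.
  by rewrite /edge_energy; ring.
rewrite sum_sqr_sym /deformed_laplacian !mxformDm mxformNm !mxformZm mxformDm mxformNm.
rewrite mxform_adjmx mxform_degmx !mxform_scalar mul1r; ring.
Qed.

Lemma edge_energy_sum_subgraph m n (e : rel 'I_n) (e' : rel 'I_m) f
    (u : 'rV[R]_m) (v : 'rV[R]_n) :
  subgraph_via e e' f ->
  (forall i j, 0 <= edge_energy (v 0 i) (v 0 j)) ->
  (forall a b, edge_energy (u 0 a) (u 0 b) <= edge_energy (v 0 (f a)) (v 0 (f b))) ->
  edge_energy_sum e' u <= edge_energy_sum e v.
Proof.
move=> [f_inj f_edge] v_ge0 le_uv.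
have term_ge0 i j : 0 <= (e i j)%:R * edge_energy (v 0 i) (v 0 j) by rewrite mulr_ge0.
apply: (@le_trans _ _
  (\sum_a \sum_b (e (f a) (f b))%:R * edge_energy (v 0 (f a)) (v 0 (f b)))).
  apply: ler_sum => a _; apply: ler_sum => b _.
  apply: le_trans (ler_wpM2l (ler0n _ _) (le_uv a b)) _; apply: ler_wpM2r => //.
  by case: (boolP (e' a b)) => [/f_edge ->|].
apply: le_trans (ler_sum_inj (F := fun i => \sum_j _) f_inj _); last first.
  by move=> i; apply: sumr_ge0 => j _; apply: term_ge0.
by apply: ler_sum => a _; apply: (ler_sum_inj (F := fun j => _) f_inj (term_ge0 _)).
Qed.

Definition sign_normalize (a : R) : R := if s <= 0 then `|a| else a.

Lemma sqr_sign_normalize a : sign_normalize a ^+ 2 = a ^+ 2.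
Proof. by rewrite /sign_normalize; case: ifP => // _; rewrite real_normK ?num_real. Qed.

Lemma edge_energy_le_sign_normalize a b :
  edge_energy a b <= edge_energy (sign_normalize a) (sign_normalize b).
Proof.
rewrite /edge_energy /sign_normalize; case: ifP => // s_le0.
rewrite !real_normK ?num_real // -normrM lerD2l -mulNr -[X in _ <= X]mulNr.
by rewrite ler_wpM2l ?ler_norm // oppr_ge0 mulr_ge0_le0.
Qed.

Lemma edge_energy_sign_normalize_ge0 a b : s <= 0 \/ 1 <= s ->
  0 <= edge_energy (sign_normalize a) (sign_normalize b).
Proof.
rewrite /edge_energy /sign_normalize => s_range; case: ifP => [s_le0 | /negbT s_gt0].
  have Ns_ge0 : 0 <= - s by rewrite oppr_ge0.
  have := mulr_ge0 (mulr_ge0 (normr_ge0 a) (normr_ge0 b)) Ns_ge0.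
  have := sqr_ge0 (s * `|a|); have := sqr_ge0 (s * `|b|); rewrite !exprMn; nra.
have s_ge1 : 1 <= s by case: s_range => // s_le0; rewrite s_le0 in s_gt0.
have := sqr_ge0 (a - b); have := sqr_ge0 (a + b); rewrite sqrrB sqrrD; nra.
Qed.

Lemma sqnorm_map_sign_normalize k (x : 'rV[R]_k) :
  sqnorm (map_mx sign_normalize x) = sqnorm x.
Proof. by rewrite !sqnormE; apply: eq_bigr => i _; rewrite mxE sqr_sign_normalize. Qed.

Lemma mxform_deformed_laplacian_subgraph m n (e : rel 'I_n) (e' : rel 'I_m) f :
  symmetric e -> symmetric e' -> subgraph_via e e' f -> s <= 0 \/ 1 <= s ->
  forall x : 'rV[R]_m, exists2 v : 'rV[R]_n, sqnorm v = sqnorm x &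
    mxform (deformed_laplacian e' s) x x <= mxform (deformed_laplacian e s) v v.
Proof.
move=> e_sym e'_sym e'_sub s_range x; have [f_inj _] := e'_sub.
set v := map_mx sign_normalize (x *m embedmx R f).
have Nv : sqnorm v = sqnorm x by rewrite sqnorm_map_sign_normalize sqnorm_mul_embedmx.
exists v => //.
have : edge_energy_sum e' x <= edge_energy_sum e v.
  apply: edge_energy_sum_subgraph e'_sub _ _ => [i j | a b].
    by rewrite !mxE; apply: edge_energy_sign_normalize_ge0.
  by rewrite ![map_mx _ _ _ _]mxE !mul_embedmxE //; apply: edge_energy_le_sign_normalize.
have := mxform_deformed_laplacian x e'_sym; have := mxform_deformed_laplacian v e_sym.
rewrite Nv; lra.
Qed.

End EdgeEnergy.

Theorem corollary3p5 (R : realType) (n m : nat) (e : rel 'I_n) (e' : rel 'I_m)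
    (f : 'I_m -> 'I_n) :
  simple_graph e -> simple_graph e' -> subgraph_via e e' f -> (0 < m)%N ->
  forall s : R, s <= 0 \/ 1 <= s ->
  rho (deformed_laplacian e' s) <= rho (deformed_laplacian e s).
Proof.
move=> [_ e_sym] [_ e'_sym] e'_sub m_gt0 s s_range.
have n_gt0 : (0 < n)%N := leq_ltn_trans (leq0n _) (ltn_ord (f (Ordinal m_gt0))).
rewrite (rho_rayleigh_sup n_gt0 (deformed_laplacian_sym e_sym s)).
rewrite (rho_rayleigh_sup m_gt0 (deformed_laplacian_sym e'_sym s)).
apply: ge_sup => [|_ [x /= x_neq0 <-]].
  by case: (has_sup_rayleigh (deformed_laplacian e' s) m_gt0).
have [v Nv le_xv] := mxform_deformed_laplacian_subgraph e_sym e'_sym e'_sub s_range x.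
rewrite /rayleigh ler_pdivrMr ?sqnorm_gt0 // -Nv.
exact: le_trans le_xv (mxform_le_rayleigh_sup _ _ _).
Qed.
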